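(* The criterion $\Phi(g)=\frac12\sum_{k=0}^{S+1}(g(k)-\mathbb W(k))^2$ admits a unique minimizer $\hat g$ over $\mathcal C(\mathcal K)$. Moreover, an element $\hat g\in\mathcal C(\mathcal K)$ is this minimizer if and only if the process $\widehat{\mathbb H}$ defined on $\{0,\dots,S+2\}$ by $\widehat{\mathbb H}(0)=0$ and $\widehat{\mathbb H}(x)=\sum_{k=0}^{x-1}\sum_{j=0}^k\hat g(j)$ for $x\in\{1,\dots,S+2\}$ satisfies $\widehat{\mathbb H}(x)\ge\mathbb H(x)$ for all $x\in\{0,\dots,S+2\}$, with equality $\widehat{\mathbb H}(x)=\mathbb H(x)$ whenever $x\in\{s_0,s_1,\dots,s_{m+1},S+2\}$ or $x$ is a knot of $\hat g$ lying in $\{s_j+1,\dots,s_{j+1}-1\}$ for some $j\in\{0,\dots,m\}$.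
   Context: Let $p_0$ be a convex probability mass function on $\mathbb N=\{0,1,\dots\}$ with support $\{0,\dots,S\}$, $S\ge1$ an integer (convex means $\Delta p_0(k)=p_0(k+1)-2p_0(k)+p_0(k-1)\ge0$ for all $k\ge1$). A knot of a sequence (or finite vector) $p$ is an integer $k\ge1$ (in the index range where $\Delta p(k)$ is defined) with $\Delta p(k)>0$; note $S+1$ is a knot of $p_0$. Let $F_{p_0}(k)=\sum_{j=0}^kp_0(j)$, $F_{p_0}(-1)=0$. Let $\mathbb U$ be a standard Brownian bridge on $[0,1]$, define $\mathbb W(k)=\mathbb U(F_{p_0}(k))-\mathbb U(F_{p_0}(k-1))$ for $k\in\{0,\dots,S+1\}$ (so $\mathbb W(S+1)=0$), and $\mathbb H(0)=0$, $\mathbb H(z)=\sum_{k=0}^{z-1}\mathbb U(F_{p_0}(k))$ for $z\ge1$. Let $s_1<\dots<s_m$ be the knots of $p_0$ lying in $\{1,\dots,S\}$ (the interior knots; possibly $m=0$), and put $s_0=0$, $s_{m+1}=S+1$, $\mathcal K=\{s_1,\dots,s_m\}$. A vector $g=(g(0),\dots,g(S+1))$ is convex on $\{a,\dots,b\}$ if $g(k+1)-2g(k)+g(k-1)\ge0$ for all $a<k<b$. $\mathcal C(\mathcal K)$ is the set of $g\in\mathbb R^{S+2}$ that are convex on $\{s_j,\dots,s_{j+1}\}$ for every $j=0,\dots,m$. The statement holds for every realization of $\mathbb U$. *)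

From Stdlib Require Import Reals Lra Lia.
Open Scope R_scope.

Fixpoint sumR (f : nat -> R) (n : nat) : R :=
  match n with
  | O => 0
  | S n' => sumR f n' + f n'
  end.

(* second difference  Delta f k = f(k+1) - 2 f(k) + f(k-1), used for k >= 1 *)
Definition Delta (f : nat -> R) (k : nat) : R :=
  f (S k) - 2 * f k + f (k - 1)%nat.

(* cdf p0 n = F_{p0}(n-1) = sum_{j<n} p0 j ; so F(k) = cdf (k+1), F(-1) = cdf 0 = 0 *)
Definition cdf (p0 : nat -> R) (n : nat) : R := sumR p0 n.

Definition convex_pmf_support (p0 : nat -> R) (S : nat) : Prop :=
  (forall k, (k <= S)%nat -> 0 < p0 k) /\
  (forall k, (S < k)%nat -> p0 k = 0) /\
  sumR p0 (S + 1) = 1 /\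
  (forall k, (1 <= k)%nat -> 0 <= Delta p0 k).

Definition W (U : R -> R) (p0 : nat -> R) (k : nat) : R :=
  U (cdf p0 (S k)) - U (cdf p0 k).

Definition HH (U : R -> R) (p0 : nat -> R) (z : nat) : R :=
  sumR (fun k => U (cdf p0 (S k))) z.

(* x is one of s_0 = 0, s_1, ..., s_m (interior knots of p0), s_{m+1} = S+1 *)
Definition is_s (p0 : nat -> R) (S : nat) (x : nat) : Prop :=
  x = O \/ x = (S + 1)%nat \/ ((1 <= x)%nat /\ (x <= S)%nat /\ 0 < Delta p0 x).

Definition consec_s (p0 : nat -> R) (S : nat) (a b : nat) : Prop :=
  is_s p0 S a /\ is_s p0 S b /\ (a < b)%nat /\
  (forall c, (a < c)%nat -> (c < b)%nat -> ~ is_s p0 S c).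

Definition in_CK (p0 : nat -> R) (S : nat) (g : nat -> R) : Prop :=
  forall a b, consec_s p0 S a b ->
  forall k, (a < k)%nat -> (k < b)%nat -> 0 <= Delta g k.

Definition Phi (U : R -> R) (p0 : nat -> R) (S : nat) (g : nat -> R) : R :=
  / 2 * sumR (fun k => (g k - W U p0 k) ^ 2) (S + 2).

Definition is_minimizer (U : R -> R) (p0 : nat -> R) (S : nat) (g : nat -> R) : Prop :=
  in_CK p0 S g /\ forall h, in_CK p0 S h -> Phi U p0 S g <= Phi U p0 S h.

Definition Hhat (g : nat -> R) (x : nat) : R :=
  sumR (fun k => sumR g (S k)) x.

Definition char_cond (U : R -> R) (p0 : nat -> R) (S : nat) (g : nat -> R) : Prop :=
  (forall x, (x <= S + 2)%nat -> HH U p0 x <= Hhat g x) /\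
  (forall x, (x <= S + 2)%nat ->
     (is_s p0 S x \/ x = (S + 2)%nat \/
      (exists a b, consec_s p0 S a b /\ (a < x)%nat /\ (x < b)%nat /\ 0 < Delta g x)) ->
     Hhat g x = HH U p0 x).

From Pilot Require Import Defs.
From Stdlib Require Import Reals Lra Lia Wf_nat ClassicalEpsilon Classical.
Import Defs.
Open Scope R_scope.

(* Phi is half the squared distance from W to the closed convex cone C(K) in
   R^{S+2}, so a minimizing sequence is Cauchy by the parallelogram law and its
   limit is the unique minimizer.  A point g of the cone is the minimizer iff
   <g - W, h - g> >= 0 for every h in the cone.  Summation by parts turns
   <g - W, v> into sum_x (Hhat g x - HH x) * Delta v x plus boundary terms, and
   testing the inequality with h = g + (x - .)_+ and h = g - t (x - .)_+ yields
   exactly the inequalities and equalities of the characterisation. *)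

Lemma sumR_ext f g n : (forall k, (k < n)%nat -> f k = g k) -> sumR f n = sumR g n.
Proof.
  induction n as [|n IH]; intros Hfg; simpl; auto.
  rewrite IH by (intros; apply Hfg; lia). rewrite Hfg by lia. reflexivity.
Qed.

Lemma sumR_add f g n : sumR (fun k => f k + g k) n = sumR f n + sumR g n.
Proof. induction n as [|n IH]; simpl; [lra | rewrite IH; ring]. Qed.

Lemma sumR_sub f g n : sumR (fun k => f k - g k) n = sumR f n - sumR g n.
Proof. induction n as [|n IH]; simpl; [lra | rewrite IH; ring]. Qed.

Lemma sumR_scal c f n : sumR (fun k => c * f k) n = c * sumR f n.
Proof. induction n as [|n IH]; simpl; [lra | rewrite IH; ring]. Qed.

Lemma sumR_ge0 f n : (forall k, (k < n)%nat -> 0 <= f k) -> 0 <= sumR f n.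
Proof.
  induction n as [|n IH]; intros Hf; simpl; [lra|].
  pose proof (Hf n ltac:(lia)). pose proof (IH ltac:(intros; apply Hf; lia)). lra.
Qed.

Lemma sumR_eq0 f n : (forall k, (k < n)%nat -> f k = 0) -> sumR f n = 0.
Proof.
  induction n as [|n IH]; intros Hf; simpl; [reflexivity|].
  rewrite IH by (intros; apply Hf; lia). rewrite Hf by lia. ring.
Qed.

Lemma sumR_ge_term f n j :
  (forall k, (k < n)%nat -> 0 <= f k) -> (j < n)%nat -> f j <= sumR f n.
Proof.
  induction n as [|n IH]; intros Hf Hj; simpl; [lia|].
  destruct (Nat.eq_dec j n) as [->|].
  - pose proof (sumR_ge0 f n ltac:(intros; apply Hf; lia)). lra.
  - pose proof (IH ltac:(intros; apply Hf; lia) ltac:(lia)). pose proof (Hf n ltac:(lia)). lra.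
Qed.

Lemma Un_cv_const c : Un_cv (fun _ => c) c.
Proof. intros e He. exists 0%nat. intros. unfold Rdist. rewrite Rminus_diag, Rabs_R0. lra. Qed.

Lemma sumR_cv (f : nat -> nat -> R) (l : nat -> R) N :
  (forall k, Un_cv (fun n => f n k) (l k)) -> Un_cv (fun n => sumR (f n) N) (sumR l N).
Proof.
  intros Hf. induction N as [|N IH]; simpl; [apply Un_cv_const | apply CV_plus; auto].
Qed.

Lemma Un_cv_sq u l : Un_cv u l -> Un_cv (fun n => u n ^ 2) (l ^ 2).
Proof.
  intros Hu. apply (Un_cv_ext (fun n => u n * u n)); [intros; ring|].
  replace (l ^ 2) with (l * l) by ring. apply CV_mult; exact Hu.
Qed.

Lemma Delta_lin a b g h k :
  Delta (fun j => a * g j + b * h j) k = a * Delta g k + b * Delta h k.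
Proof. unfold Delta; ring. Qed.

Lemma in_CK_comb p0 S a b g h : 0 <= a -> 0 <= b -> in_CK p0 S g -> in_CK p0 S h ->
  in_CK p0 S (fun j => a * g j + b * h j).
Proof.
  intros Ha Hb Hg Hh x y Hxy k H1 H2. rewrite Delta_lin.
  pose proof (Hg x y Hxy k H1 H2). pose proof (Hh x y Hxy k H1 H2). nra.
Qed.

Lemma in_CK_const p0 S c : in_CK p0 S (fun _ => c).
Proof. intros a b _ k _ _. unfold Delta. lra. Qed.

Lemma is_s_le p0 S x : is_s p0 S x -> (x <= S + 1)%nat.
Proof. intros [H|[H|H]]; lia. Qed.

Lemma consec_s_le p0 S a b : consec_s p0 S a b -> (b <= S + 1)%nat.
Proof. intros (_ & Hb & _). exact (is_s_le p0 S b Hb). Qed.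

Lemma last_below (P : nat -> Prop) k : P 0%nat -> (0 < k)%nat ->
  exists a, (a < k)%nat /\ P a /\ forall c, (a < c)%nat -> (c < k)%nat -> ~ P c.
Proof.
  intros P0. induction k as [|k IH]; intros Hk; [lia|].
  destruct (classic (P k)) as [Pk|nPk].
  - exists k. split; [lia|split; auto]. intros; lia.
  - destruct (Nat.eq_dec k 0) as [->|]; [contradiction|].
    destruct (IH ltac:(lia)) as (a & Ha & Pa & Hgap). exists a. split; [lia|split; auto].
    intros c H1 H2. destruct (Nat.eq_dec c k) as [->|]; auto. apply Hgap; lia.
Qed.

Lemma first_above (P : nat -> Prop) k m : P m -> (k < m)%nat ->
  exists b, (k < b)%nat /\ P b /\ forall c, (k < c)%nat -> (c < b)%nat -> ~ P c.
Proof.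
  intros Pm Hkm.
  destruct (dec_inh_nat_subset_has_unique_least_element (fun c => (k < c)%nat /\ P c))
    as (b & ((Hb & Pb) & Hleast) & _).
  - intros n. apply classic.
  - exists m; auto.
  - exists b. repeat split; auto. intros c H1 H2 Pc. specialize (Hleast c (conj H1 Pc)). lia.
Qed.

Lemma not_is_s_in_block p0 S k : (1 <= k <= S)%nat -> ~ is_s p0 S k ->
  exists a b, consec_s p0 S a b /\ (a < k < b)%nat.
Proof.
  intros Hk Hnk.
  destruct (last_below (is_s p0 S) k (or_introl eq_refl) ltac:(lia)) as (a & Ha & Pa & Hgapa).
  destruct (first_above (is_s p0 S) k (S + 1) (or_intror (or_introl eq_refl)) ltac:(lia))
    as (b & Hb & Pb & Hgapb).
  exists a, b. repeat split; auto; try lia.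
  intros c H1 H2. destruct (Nat.lt_total c k) as [Hlt|[->|Hgt]]; auto.
Qed.

Lemma sumR_prefix f m N :
  sumR (fun k => if (k <? m)%nat then f k else 0) N = sumR f (Nat.min m N).
Proof.
  induction N as [|N IH]; simpl; [rewrite Nat.min_0_r; reflexivity|].
  rewrite IH. destruct (Nat.ltb_spec N m).
  - replace (Nat.min m (Datatypes.S N)) with (Datatypes.S N) by lia.
    replace (Nat.min m N) with N by lia. reflexivity.
  - replace (Nat.min m (Datatypes.S N)) with (Nat.min m N) by lia. ring.
Qed.

Definition dot (N : nat) (u v : nat -> R) : R := sumR (fun k => u k * v k) N.
Definition sqnorm (N : nat) (v : nat -> R) : R := sumR (fun k => v k ^ 2) N.

Lemma sqnorm_ge0 N v : 0 <= sqnorm N v.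
Proof. apply sumR_ge0; intros; apply pow2_ge_0. Qed.

Lemma sqnorm_ge_term N v k : (k < N)%nat -> v k ^ 2 <= sqnorm N v.
Proof. intros; apply (sumR_ge_term (fun k => v k ^ 2)); auto; intros; apply pow2_ge_0. Qed.

Definition resid (U : R -> R) (p0 g : nat -> R) (k : nat) : R := g k - W U p0 k.

Lemma Phi_sub U p0 S g h :
  Phi U p0 S h - Phi U p0 S g =
  dot (S + 2) (resid U p0 g) (fun k => h k - g k)
  + / 2 * sqnorm (S + 2) (fun k => h k - g k).
Proof.
  unfold Phi, dot, sqnorm, resid.
  rewrite <- Rmult_minus_distr_l, <- sumR_sub, <- (sumR_scal (/ 2) (fun k => (h k - g k) ^ 2)),
    <- sumR_add, <- sumR_scal.
  apply sumR_ext. intros. field.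
Qed.

Lemma Phi_ge0 U p0 S h : 0 <= Phi U p0 S h.
Proof.
  unfold Phi. pose proof (sqnorm_ge0 (S + 2) (fun k => h k - W U p0 k)). unfold sqnorm in *. lra.
Qed.

Lemma Phi_midpoint U p0 S a b :
  Phi U p0 S (fun k => / 2 * a k + / 2 * b k) =
  (Phi U p0 S a + Phi U p0 S b) / 2 - / 8 * sqnorm (S + 2) (fun k => a k - b k).
Proof.
  unfold Phi, sqnorm.
  rewrite (sumR_ext _ (fun k => / 2 * ((a k - W U p0 k) ^ 2 + (b k - W U p0 k) ^ 2)
                                + - / 4 * (a k - b k) ^ 2)) by (intros; field).
  rewrite sumR_add, !sumR_scal, sumR_add. field.
Qed.

(* Parallelogram law, through the midpoint of a and b. *)
Lemma sq_sub_le_Phi_excess U p0 S m a b k :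
  (forall h, in_CK p0 S h -> m <= Phi U p0 S h) ->
  in_CK p0 S a -> in_CK p0 S b -> (k <= S + 1)%nat ->
  (a k - b k) ^ 2 <= 4 * (Phi U p0 S a + Phi U p0 S b - 2 * m).
Proof.
  intros Hm Ha Hb Hk.
  pose proof (Hm _ (in_CK_comb p0 S (/ 2) (/ 2) a b ltac:(lra) ltac:(lra) Ha Hb)) as Hmid.
  rewrite Phi_midpoint in Hmid.
  pose proof (sqnorm_ge_term (S + 2) (fun k => a k - b k) k ltac:(lia)). simpl in *. lra.
Qed.

Lemma minimizer_unique U p0 S g1 g2 :
  is_minimizer U p0 S g1 -> is_minimizer U p0 S g2 ->
  forall k, (k <= S + 1)%nat -> g1 k = g2 k.
Proof.
  intros [H1 M1] [H2 M2] k Hk.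
  pose proof (sq_sub_le_Phi_excess U p0 S (Phi U p0 S g1) g1 g2 k M1 H1 H2 Hk).
  pose proof (M1 _ H2). pose proof (M2 _ H1).
  assert ((g1 k - g2 k) ^ 2 <= 0) by lra. nra.
Qed.

(* ramp x k = (x - k)_+, thanks to truncated subtraction on nat. *)
Definition ramp (x k : nat) : R := INR (x - k).

Lemma Delta_ramp x k : (1 <= k)%nat -> Delta (ramp x) k = if Nat.eqb k x then 1 else 0.
Proof.
  intros Hk. unfold Delta, ramp. destruct (Nat.eqb_spec k x) as [->|].
  - replace (x - Datatypes.S x)%nat with 0%nat by lia. rewrite Nat.sub_diag.
    replace (x - (x - 1))%nat with 1%nat by lia. simpl; ring.
  - destruct (Compare_dec.le_lt_dec x k).
    + replace (x - Datatypes.S k)%nat with 0%nat by lia. replace (x - k)%nat with 0%nat by lia.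
      replace (x - (k - 1))%nat with 0%nat by lia. simpl; ring.
    + replace (x - (k - 1))%nat with (Datatypes.S (Datatypes.S (x - Datatypes.S k))) by lia.
      replace (x - k)%nat with (Datatypes.S (x - Datatypes.S k)) by lia.
      rewrite !S_INR. ring.
Qed.

Lemma in_CK_ramp p0 S x : in_CK p0 S (ramp x).
Proof. intros a b _ k H1 _. rewrite Delta_ramp by lia. destruct (Nat.eqb k x); lra. Qed.

Lemma dot_ramp N d x : (x <= N)%nat -> dot N d (ramp x) = Hhat d x.
Proof.
  unfold dot. induction x as [|x IH]; intros Hx.
  - apply sumR_eq0. intros k _. unfold ramp. simpl. ring.
  - change (Hhat d (Datatypes.S x)) with (Hhat d x + sumR d (Datatypes.S x)).
    rewrite <- IH by lia.
    replace (sumR d (Datatypes.S x)) with (sumR d (Nat.min (Datatypes.S x) N)) by (f_equal; lia).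
    rewrite <- sumR_prefix, <- sumR_add. apply sumR_ext. intros k _. unfold ramp.
    destruct (Nat.ltb_spec k (Datatypes.S x)).
    + replace (Datatypes.S x - k)%nat with (Datatypes.S (x - k)) by lia. rewrite S_INR. ring.
    + replace (Datatypes.S x - k)%nat with 0%nat by lia. replace (x - k)%nat with 0%nat by lia.
      simpl; ring.
Qed.

Lemma Hhat_sub f g x : Hhat (fun k => f k - g k) x = Hhat f x - Hhat g x.
Proof.
  unfold Hhat. rewrite <- sumR_sub. apply sumR_ext. intros. apply sumR_sub.
Qed.

Lemma Hhat_W U p0 x : U 0 = 0 -> Hhat (W U p0) x = HH U p0 x.
Proof.
  intros HU0. unfold Hhat, HH. apply sumR_ext. intros k _.
  induction (Datatypes.S k) as [|n IH]; simpl.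
  - unfold cdf; simpl. rewrite HU0. reflexivity.
  - rewrite IH. unfold W, cdf. simpl. ring.
Qed.

Lemma Hhat_resid U p0 g x : U 0 = 0 -> Hhat (resid U p0 g) x = Hhat g x - HH U p0 x.
Proof. intros HU0. unfold resid. rewrite Hhat_sub, Hhat_W by exact HU0. reflexivity. Qed.

Lemma dot_by_parts d h n :
  dot (n + 2) d h =
  sumR (fun x => Hhat d (x + 1) * Delta h (x + 1)) n
  + Hhat d (n + 2) * h (n + 1)%nat + Hhat d (n + 1) * (h n - 2 * h (n + 1)%nat).
Proof.
  unfold dot. induction n as [|n IH].
  - unfold Hhat; simpl. ring.
  - replace (Datatypes.S n + 2)%nat with (Datatypes.S (n + 2)) by lia.
    simpl sumR at 1. rewrite IH. simpl sumR.
    replace (Datatypes.S n + 1)%nat with (Datatypes.S (n + 1)) by lia.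
    replace (n + 2)%nat with (Datatypes.S (n + 1)) by lia.
    unfold Hhat, Delta; simpl sumR.
    replace (Datatypes.S (n + 1) - 1)%nat with (n + 1)%nat by lia.
    replace (n + 1)%nat with (Datatypes.S n) by lia. simpl. rewrite Nat.sub_0_r. ring.
Qed.

Lemma ge0_of_quadratic_perturbation a q : 0 <= q ->
  (forall t, 0 < t -> t <= 1 -> 0 <= t * a + / 2 * t ^ 2 * q) -> 0 <= a.
Proof.
  intros Hq Hpert. destruct (Rle_or_lt 0 a) as [|Ha]; auto. exfalso.
  set (t := - a / (q - a + 1)).
  assert (Ht : t * (q - a + 1) = - a) by (unfold t; field; lra).
  assert (Ht0 : 0 < t) by (unfold t; apply Rdiv_lt_0_compat; lra).
  specialize (Hpert t Ht0 ltac:(nra)). nra.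
Qed.

Section Characterisation.
Variables (S : nat) (p0 : nat -> R) (U : R -> R).
Hypothesis HU0 : U 0 = 0.

Lemma minimizer_variational_ineq g h : is_minimizer U p0 S g -> in_CK p0 S h ->
  0 <= dot (S + 2) (resid U p0 g) (fun k => h k - g k).
Proof.
  intros [Hg Hmin] Hh.
  apply (ge0_of_quadratic_perturbation _ (sqnorm (S + 2) (fun k => h k - g k)));
    [apply sqnorm_ge0|].
  intros t Ht0 Ht1.
  pose proof (Hmin _ (in_CK_comb p0 S (1 - t) t g h ltac:(lra) ltac:(lra) Hg Hh)) as Hle.
  pose proof (Phi_sub U p0 S g (fun k => (1 - t) * g k + t * h k)) as Hsub.
  unfold dot, sqnorm in *.
  rewrite (sumR_ext _ (fun k => t * (resid U p0 g k * (h k - g k)))) in Hsub by (intros; ring).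
  rewrite (sumR_ext (fun k => ((1 - t) * g k + t * h k - g k) ^ 2)
                    (fun k => t ^ 2 * (h k - g k) ^ 2)) in Hsub by (intros; ring).
  rewrite !sumR_scal in Hsub. lra.
Qed.

Lemma minimizer_dot_ramp g x c : is_minimizer U p0 S g -> (x <= S + 2)%nat ->
  in_CK p0 S (fun k => 1 * g k + c * ramp x k) -> 0 <= c * (Hhat g x - HH U p0 x).
Proof.
  intros Hm Hx Hh. pose proof (minimizer_variational_ineq _ _ Hm Hh) as Hvi.
  unfold dot in Hvi.
  rewrite (sumR_ext _ (fun k => c * (resid U p0 g k * ramp x k))) in Hvi by (intros; ring).
  rewrite sumR_scal in Hvi. fold (dot (S + 2) (resid U p0 g) (ramp x)) in Hvi.
  rewrite dot_ramp, Hhat_resid in Hvi by auto. exact Hvi.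
Qed.

Lemma in_CK_sub_ramp g x t : in_CK p0 S g -> 0 <= t ->
  (forall a b, consec_s p0 S a b -> (a < x < b)%nat -> t <= Delta g x) ->
  in_CK p0 S (fun k => 1 * g k + - t * ramp x k).
Proof.
  intros Hg Ht Hx a b Hab k H1 H2. rewrite Delta_lin, Delta_ramp by lia.
  pose proof (Hg a b Hab k H1 H2).
  destruct (Nat.eqb_spec k x) as [->|]; [specialize (Hx a b Hab ltac:(lia)) |]; lra.
Qed.

Lemma minimizer_char_cond g : is_minimizer U p0 S g -> char_cond U p0 S g.
Proof.
  intros Hm. pose proof Hm as [Hg _].
  assert (Hge : forall x, (x <= S + 2)%nat -> HH U p0 x <= Hhat g x).
  { intros x Hx. pose proof (minimizer_dot_ramp g x 1 Hm Hx
      (in_CK_comb p0 S 1 1 g (ramp x) ltac:(lra) ltac:(lra) Hg (in_CK_ramp p0 S x))). lra. }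
  split; [exact Hge|]. intros x Hx Hcase.
  (* Wherever equality is required, g - t (x - .)_+ stays in C(K) for some t > 0. *)
  assert (Hslack : exists t, 0 < t /\
            forall a b, consec_s p0 S a b -> (a < x < b)%nat -> t <= Delta g x).
  { destruct Hcase as [Hs|[HS2|(a & b & Hab & H1 & H2 & Hpos)]].
    - exists 1. split; [lra|]. intros a b (_ & _ & _ & Hno) Hax. exfalso.
      apply (Hno x); tauto || lia.
    - exists 1. split; [lra|]. intros a b Hab Hax. apply consec_s_le in Hab. lia.
    - exists (Delta g x). split; [exact Hpos | intros; lra]. }
  destruct Hslack as (t & Ht & Htx).
  pose proof (minimizer_dot_ramp g x (- t) Hm Hx (in_CK_sub_ramp g x t Hg ltac:(lra) Htx)).
  pose proof (Hge x Hx). nra.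
Qed.

Lemma char_cond_dot g v : char_cond U p0 S g ->
  dot (S + 2) (resid U p0 g) v =
  sumR (fun x => (Hhat g (x + 1) - HH U p0 (x + 1)) * Delta v (x + 1)) S.
Proof.
  intros [_ Heq]. rewrite dot_by_parts, !Hhat_resid by exact HU0.
  rewrite (Heq (S + 2)%nat), (Heq (S + 1)%nat) by
    (lia || (right; left; reflexivity) || (left; right; left; reflexivity)).
  rewrite !Rminus_diag, !Rmult_0_l, !Rplus_0_r.
  apply sumR_ext. intros x _. rewrite Hhat_resid by exact HU0. reflexivity.
Qed.

Lemma char_cond_gap_or_flat g x : in_CK p0 S g -> char_cond U p0 S g -> (1 <= x <= S)%nat ->
  Hhat g x = HH U p0 x \/ exists a b, consec_s p0 S a b /\ (a < x < b)%nat /\ Delta g x = 0.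
Proof.
  intros Hg [_ Heq] Hx. destruct (classic (is_s p0 S x)) as [Hs|Hns].
  - left. apply Heq; [lia | left; exact Hs].
  - destruct (not_is_s_in_block p0 S x Hx Hns) as (a & b & Hab & Hax).
    destruct (Hg a b Hab x ltac:(lia) ltac:(lia)) as [Hpos|Hflat].
    + left. apply Heq; [lia|]. right; right.
      exists a, b. split; [exact Hab | repeat split; lia || exact Hpos].
    + right. exists a, b. auto.
Qed.

Lemma char_cond_minimizer g : in_CK p0 S g -> char_cond U p0 S g -> is_minimizer U p0 S g.
Proof.
  intros Hg Hc. split; [exact Hg|]. intros h Hh.
  assert (Hterms : forall y, (y < S)%nat ->
            0 <= (Hhat g (y + 1) - HH U p0 (y + 1)) * Delta h (y + 1) /\
            (Hhat g (y + 1) - HH U p0 (y + 1)) * Delta g (y + 1) = 0).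
  { intros y Hy. pose proof (proj1 Hc (y + 1)%nat ltac:(lia)).
    destruct (char_cond_gap_or_flat g (y + 1) Hg Hc ltac:(lia))
      as [Hgap|(a & b & Hab & Hax & Hflat)].
    - rewrite Hgap, Rminus_diag. lra.
    - rewrite Hflat. pose proof (Hh a b Hab (y + 1)%nat ltac:(lia) ltac:(lia)). nra. }
  assert (Hdot_h : 0 <= dot (S + 2) (resid U p0 g) h).
  { rewrite char_cond_dot by exact Hc. apply sumR_ge0. intros y Hy. apply (Hterms y Hy). }
  assert (Hdot_g : dot (S + 2) (resid U p0 g) g = 0).
  { rewrite char_cond_dot by exact Hc. apply sumR_eq0. intros y Hy. apply (Hterms y Hy). }
  pose proof (Phi_sub U p0 S g h). pose proof (sqnorm_ge0 (S + 2) (fun k => h k - g k)).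
  assert (Hsplit : dot (S + 2) (resid U p0 g) (fun k => h k - g k)
          = dot (S + 2) (resid U p0 g) h - dot (S + 2) (resid U p0 g) g).
  { unfold dot. rewrite <- sumR_sub. apply sumR_ext. intros; ring. }
  lra.
Qed.

End Characterisation.

Lemma Phi_cv U p0 S (g : nat -> nat -> R) (l : nat -> R) :
  (forall k, Un_cv (fun n => g n k) (l k)) -> Un_cv (fun n => Phi U p0 S (g n)) (Phi U p0 S l).
Proof.
  intros Hg. unfold Phi. apply CV_mult; [apply Un_cv_const|].
  apply (sumR_cv (fun n k => (g n k - W U p0 k) ^ 2)). intros k.
  apply Un_cv_sq, CV_minus; [apply Hg | apply Un_cv_const].
Qed.

Definition trunc (S : nat) (h : nat -> R) (k : nat) : R := if Nat.leb k (S + 1) then h k else 0.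

Lemma in_CK_trunc p0 S h : in_CK p0 S h -> in_CK p0 S (trunc S h).
Proof.
  intros Hh a b Hab k H1 H2. pose proof (Hh a b Hab k H1 H2). apply consec_s_le in Hab.
  unfold Delta, trunc in *.
  destruct (Nat.leb_spec (Datatypes.S k) (S + 1)), (Nat.leb_spec k (S + 1)),
    (Nat.leb_spec (k - 1) (S + 1)); lia || auto.
Qed.

Lemma Phi_trunc U p0 S h : Phi U p0 S (trunc S h) = Phi U p0 S h.
Proof.
  unfold Phi. f_equal. apply sumR_ext. intros k Hk. unfold trunc.
  destruct (Nat.leb_spec k (S + 1)); [reflexivity | lia].
Qed.

Section Existence.
Variables (S : nat) (p0 : nat -> R) (U : R -> R).

Let neg_values (r : R) : Prop := exists h, in_CK p0 S h /\ r = - Phi U p0 S h.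

Lemma neg_values_bound : bound neg_values.
Proof. exists 0. intros r (h & _ & ->). pose proof (Phi_ge0 U p0 S h). lra. Qed.

Lemma neg_values_inhabited : exists r, neg_values r.
Proof.
  exists (- Phi U p0 S (fun _ => 0)), (fun _ => 0). split; [apply in_CK_const | reflexivity].
Qed.

Definition Phi_inf : R :=
  - proj1_sig (completeness neg_values neg_values_bound neg_values_inhabited).

Lemma Phi_inf_le h : in_CK p0 S h -> Phi_inf <= Phi U p0 S h.
Proof.
  intros Hh. unfold Phi_inf.
  destruct (completeness neg_values neg_values_bound neg_values_inhabited) as [l Hl]. simpl.
  assert (- Phi U p0 S h <= l) by (apply (proj1 Hl); exists h; auto). lra.
Qed.

Lemma Phi_inf_approx (e : posreal) : exists h, in_CK p0 S h /\ Phi U p0 S h < Phi_inf + e.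
Proof.
  unfold Phi_inf.
  destruct (completeness neg_values neg_values_bound neg_values_inhabited) as [l Hl]. simpl.
  apply NNPP. intros Hnone.
  assert (is_upper_bound neg_values (l - e)) as Hub'.
  { intros r (h & Hh & ->). destruct (Rle_or_lt (- Phi U p0 S h) (l - e)); auto.
    exfalso. apply Hnone. exists h. split; auto. lra. }
  pose proof (proj2 Hl _ Hub'). pose proof (cond_pos e). lra.
Qed.

(* Truncating beyond S + 1 makes the sequence converge at every index, not just up to S + 1. *)
Definition minimizing_seq (n : nat) : nat -> R :=
  trunc S (proj1_sig (constructive_indefinite_description _ (Phi_inf_approx (RinvN n)))).

Lemma minimizing_seq_spec n :
  in_CK p0 S (minimizing_seq n) /\ Phi U p0 S (minimizing_seq n) < Phi_inf + RinvN n.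
Proof.
  unfold minimizing_seq. destruct (constructive_indefinite_description _ _) as [h [Hh Hlt]]. simpl.
  rewrite Phi_trunc. split; [apply in_CK_trunc|]; assumption.
Qed.

Lemma minimizing_seq_close n p k :
  (minimizing_seq n k - minimizing_seq p k) ^ 2 <= 4 * (RinvN n + RinvN p).
Proof.
  pose proof (cond_pos (RinvN n)). pose proof (cond_pos (RinvN p)).
  destruct (Nat.leb_spec k (S + 1)).
  - destruct (minimizing_seq_spec n) as [Hn Hn']. destruct (minimizing_seq_spec p) as [Hp Hp'].
    pose proof (sq_sub_le_Phi_excess U p0 S Phi_inf _ _ k Phi_inf_le Hn Hp ltac:(lia)). lra.
  - unfold minimizing_seq, trunc. destruct (Nat.leb_spec k (S + 1)); [lia|].
    rewrite Rminus_diag, pow_i by lia. lra.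
Qed.

Lemma minimizing_seq_cauchy k : Cauchy_crit (fun n => minimizing_seq n k).
Proof.
  intros e He.
  assert (He2 : 0 < e ^ 2 / 8) by (apply Rdiv_lt_0_compat; [apply pow_lt|]; lra).
  destruct (RinvN_cv He2) as [N HN]. exists N.
  assert (Hsmall : forall m, (m >= N)%nat -> RinvN m < e ^ 2 / 8).
  { intros m Hm. specialize (HN m Hm). pose proof (cond_pos (RinvN m)).
    unfold Rdist in HN. rewrite Rminus_0_r, Rabs_right in HN by lra. exact HN. }
  intros n p Hn Hp. pose proof (minimizing_seq_close n p k).
  pose proof (Hsmall n Hn). pose proof (Hsmall p Hp).
  unfold Rdist. rewrite <- (Rabs_pos_eq e) by lra. apply Rsqr_lt_abs_0. unfold Rsqr. nra.
Qed.

Definition minimizer_of_limit (k : nat) : R :=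
  proj1_sig (R_complete _ (minimizing_seq_cauchy k)).

Lemma minimizing_seq_cv k : Un_cv (fun n => minimizing_seq n k) (minimizer_of_limit k).
Proof. unfold minimizer_of_limit. destruct (R_complete _ _); assumption. Qed.

Lemma minimizer_exists : exists g, is_minimizer U p0 S g.
Proof.
  exists minimizer_of_limit. split.
  - intros a b Hab k H1 H2.
    apply (@Rle_cv_lim (fun _ => 0) (fun n => Delta (minimizing_seq n) k)).
    + intros n. apply (proj1 (minimizing_seq_spec n) a b Hab k H1 H2).
    + apply Un_cv_const.
    + unfold Delta. apply CV_plus; [apply CV_minus|].
      * apply minimizing_seq_cv.
      * apply CV_mult; [apply Un_cv_const | apply minimizing_seq_cv].
      * apply minimizing_seq_cv.
  - intros h Hh. apply Rle_trans with Phi_inf; [|apply Phi_inf_le; exact Hh].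
    apply (@Rle_cv_lim (fun n => Phi U p0 S (minimizing_seq n)) (fun n => Phi_inf + RinvN n)).
    + intros n. apply Rlt_le, minimizing_seq_spec.
    + apply Phi_cv, minimizing_seq_cv.
    + rewrite <- (Rplus_0_r Phi_inf) at 1. apply CV_plus; [apply Un_cv_const | apply RinvN_cv].
Qed.

End Existence.

Theorem theorem2 (S : nat) (p0 : nat -> R) (U : R -> R)
  (hS : (1 <= S)%nat)
  (hp0 : convex_pmf_support p0 S)
  (hU0 : U 0 = 0) (hU1 : U 1 = 0) :
  (exists g, is_minimizer U p0 S g) /\
  (forall g1 g2, is_minimizer U p0 S g1 -> is_minimizer U p0 S g2 ->
     forall k, (k <= S + 1)%nat -> g1 k = g2 k) /\
  (forall g, in_CK p0 S g -> (is_minimizer U p0 S g <-> char_cond U p0 S g)).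
Proof.
  split; [apply minimizer_exists|].
  split; [apply minimizer_unique|].
  intros g Hg. split.
  - apply minimizer_char_cond; exact hU0.
  - apply char_cond_minimizer; assumption.
Qed.
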